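(* Let $S$ be a semibounded relation in $\mathfrak H$ with lower bound $\gamma\in\mathbb R$ and let $c\le\gamma$. For every semibounded selfadjoint extension $H$ of $S$ one has: $c\le H$ if and only if $\mathfrak t_{S_{{\rm K},c}}\le\mathfrak t_H$ (i.e. $S_{{\rm K},c}\le H$).
   Context: Linear relations in $\mathfrak H$ are linear subspaces of $\mathfrak H\times\mathfrak H$; $T^*$ adjoint, $T^{**}$ closure, $RT=\{\{f,h\}:\exists g,\{f,g\}\in T,\{g,h\}\in R\}$, $c+T=\{\{f,g+cf\}:\{f,g\}\in T\}$. $S$ is semibounded with lower bound $\gamma$ if $\gamma$ is the supremum of all $c$ with $(\varphi',\varphi)\ge c\|\varphi\|^2$ on $S$; $\mathfrak t(S)[\varphi,\psi]=(\varphi',\psi)$ on $\mathrm{dom}\,S$. A representing map for $\mathfrak t(S)-c$ is a linear operator $Q_c$ into a Hilbert space with $\mathrm{dom}\,Q_c=\mathrm{dom}\,S$ and $\mathfrak t(S)[\varphi,\psi]=c(\varphi,\psi)+(Q_c\varphi,Q_c\psi)$; companion relation $J_c=\{\{Q_c\varphi,\varphi'-c\varphi\}:\{\varphi,\varphi'\}\in S\}$; Kreĭn type extension $S_{{\rm K},c}=c+J_c^{**}J_c^*$. For a semibounded selfadjoint relation $H$, $\mathfrak t_H$ is its associated closed form (closure of $\mathfrak t(H)$). $\mathfrak t_1\le\mathfrak t_2$ means $\mathrm{dom}\,\mathfrak t_2\subset\mathrm{dom}\,\mathfrak t_1$ and $\mathfrak t_1[f,f]\le\mathfrak t_2[f,f]$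 on $\mathrm{dom}\,\mathfrak t_2$; $H\le K$ means $\mathfrak t_H\le\mathfrak t_K$; $c\le H$ means $(f',f)\ge c\|f\|^2$ for all $\{f,f'\}\in H$. *)

From HB Require Import structures.
From mathcomp Require Import all_boot all_order all_algebra.
From mathcomp Require Import reals.
From mathcomp.real_closed Require Export complex.
Set Implicit Arguments. Unset Strict Implicit. Unset Printing Implicit Defensive.
Import Order.TTheory GRing.Theory Num.Theory.
Local Open Scope ring_scope.
Local Open Scope complex_scope.

Section Defs.
Variable R : realType.
Local Notation C := R[i].

Section Space.
Variable V : lmodType C.
Variable ip : V -> V -> C.   (* (x, y), linear in x, antilinear in y *)

Definition inner_product : Prop :=
  [/\ (forall (a : C) x y z, ip (a *: x + y) z = a * ip x z + ip y z),
      (forall x y, ip y x = (ip x y)^*),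
      (forall x, 0 <= ip x x) &
      (forall x, ip x x = 0 -> x = 0)].

(* norm convergence, expressed with ||x||^2 = (x, x) *)
Definition cauchy_seq (u : nat -> V) : Prop :=
  forall e : R, 0 < e -> exists N : nat, forall n m : nat,
    (N <= n)%N -> (N <= m)%N -> `|ip (u n - u m) (u n - u m)| < e%:C.

Definition converges_to (u : nat -> V) (f : V) : Prop :=
  forall e : R, 0 < e -> exists N : nat, forall n : nat,
    (N <= n)%N -> `|ip (u n - f) (u n - f)| < e%:C.

Definition hilbert_space : Prop :=
  inner_product /\ forall u, cauchy_seq u -> exists f, converges_to u f.

Definition rel_ge (S : V -> V -> Prop) (c : R) : Prop :=
  forall f f', S f f' -> c%:C * ip f f <= ip f' f.

Definition lower_bound (S : V -> V -> Prop) (gamma : R) : Prop :=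
  (forall c, rel_ge S c -> c <= gamma) /\
  (forall b, (forall c, rel_ge S c -> c <= b) -> gamma <= b).

Definition semibounded (S : V -> V -> Prop) : Prop :=
  exists gamma : R, lower_bound S gamma.

(* closed_form H f v : f is in dom (closure of t(H)) and the closure takes
   the value v at [f, f]. *)
Definition closed_form (H : V -> V -> Prop) (f : V) (v : C) : Prop :=
  exists u u' : nat -> V,
    [/\ (forall n, H (u n) (u' n)),
        converges_to u f,
        (forall e : R, 0 < e -> exists N : nat, forall n m : nat,
           (N <= n)%N -> (N <= m)%N ->
           `|ip (u' n - u' m) (u n - u m)| < e%:C) &
        (forall e : R, 0 < e -> exists N : nat, forall n : nat,
           (N <= n)%N -> `|ip (u' n) (u n) - v| < e%:C)].

End Space.

Definition linear_rel (A B : lmodType C) (T : A -> B -> Prop) : Prop :=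
  T 0 0 /\ forall (a : C) f g f' g', T f g -> T f' g' ->
    T (a *: f + f') (a *: g + g').

Definition dom (A B : Type) (T : A -> B -> Prop) (f : A) : Prop :=
  exists g, T f g.

Definition adjoint (A B : lmodType C) (ipA : A -> A -> C) (ipB : B -> B -> C)
  (T : A -> B -> Prop) : B -> A -> Prop :=
  fun h k => forall f g, T f g -> ipB g h = ipA f k.

Definition rel_comp (X Y Z : Type) (Rl : Y -> Z -> Prop) (T : X -> Y -> Prop)
  : X -> Z -> Prop :=
  fun f h => exists g, T f g /\ Rl g h.

Definition rel_shift (V : lmodType C) (c : R) (T : V -> V -> Prop)
  : V -> V -> Prop :=
  fun f g' => exists g, T f g /\ g' = g + c%:C *: f.

Definition selfadjoint (V : lmodType C) (ip : V -> V -> C)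
  (H : V -> V -> Prop) : Prop :=
  forall f g, H f g <-> adjoint ip ip H f g.

Definition form_le (V : Type) (t1 t2 : V -> C -> Prop) : Prop :=
  forall f v, t2 f v -> (exists u, t1 f u) /\ (forall u, t1 f u -> u <= v).

Definition representing_map (V K : lmodType C) (ipV : V -> V -> C)
  (ipK : K -> K -> C) (S : V -> V -> Prop) (c : R) (Q : V -> K) : Prop :=
  (forall (a : C) f g, dom S f -> dom S g -> Q (a *: f + g) = a *: Q f + Q g) /\
  (forall phi phi' psi psi', S phi phi' -> S psi psi' ->
     ipV phi' psi = c%:C * ipV phi psi + ipK (Q phi) (Q psi)).

Definition companion (V K : lmodType C) (S : V -> V -> Prop) (c : R)
  (Q : V -> K) : K -> V -> Prop :=
  fun k h => exists phi phi', [/\ S phi phi', k = Q phi & h = phi' - c%:C *: phi].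

Definition krein_ext (V K : lmodType C) (ipV : V -> V -> C) (ipK : K -> K -> C)
  (S : V -> V -> Prop) (c : R) (Q : V -> K) : V -> V -> Prop :=
  let J := companion S c Q in
  let Jst := adjoint ipK ipV J in
  let Jstst := adjoint ipV ipK Jst in
  rel_shift c (rel_comp Jstst Jst).

End Defs.

From mathcomp Require Import all_boot all_order all_algebra.
From mathcomp Require Import boolp classical_sets reals ring lra.
From mathcomp.real_closed Require Import complex.
From Pilot Require Import Defs.
Set Implicit Arguments. Unset Strict Implicit. Unset Printing Implicit Defensive.
Import Order.TTheory GRing.Theory Num.Theory.
Local Open Scope ring_scope.
Local Open Scope complex_scope.

(* Write J for the companion relation J_c, so that S_{K,c} = c + J** J*.  For
   {f, k} in J* and {k, h} in J** one has (h + c f, f) = c ||f||^2 + ||k||^2, and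
   passing to limits the closed form of S_{K,c} takes at f the value
   c ||f||^2 + ||k||^2, where k is the element with {f, k} in J* orthogonal to
   ker J*; this shows t_{S_{K,c}} >= c, whence c <= H when S_{K,c} <= H.
   Conversely, if c <= H then t_H - c is a nonnegative hermitian form on H, which
   contains S.  Its Cauchy-Schwarz inequality gives, for f in dom t_H,
   |(phi' - c phi, f)|^2 <= (t_H[f] - c ||f||^2) ||Q phi||^2 on S, so by the Riesz
   representation theorem there is k with {f, k} in J* and
   ||k||^2 <= t_H[f] - c ||f||^2, i.e. t_{S_{K,c}}[f] <= t_H[f]. *)

Section ComplexSquaredNorm.
Variable R : realType.
Local Notation C := R[i].
Implicit Types (x y z : C) (r e : R).

Definition normc2 z : R := complex.Re z ^+ 2 + complex.Im z ^+ 2.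

Lemma normc2_ge0 z : 0 <= normc2 z.
Proof. by case: z => a b; rewrite /normc2 /=; nra. Qed.

Lemma normc2D x y : normc2 (x + y) <= 2 * normc2 x + 2 * normc2 y.
Proof.
case: x => a b; case: y => c d; rewrite /normc2 /=.
by have := sqr_ge0 (a - c); have := sqr_ge0 (b - d); nra.
Qed.

Lemma normc2M x y : normc2 (x * y) = normc2 x * normc2 y.
Proof. by case: x => a b; case: y => c d; rewrite /normc2 /=; ring. Qed.

Lemma normc2N z : normc2 (- z) = normc2 z.
Proof. by case: z => a b; rewrite /normc2 /=; ring. Qed.

Lemma normc2R r : normc2 r%:C = r ^+ 2.
Proof. by rewrite /normc2 /=; ring. Qed.

Lemma normc2J z : normc2 (conjc z) = normc2 z.
Proof. by case: z => a b; rewrite /normc2 /=; ring. Qed.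

Lemma normc2_eq0 z : normc2 z = 0 -> z = 0.
Proof.
case: z => a b; rewrite /normc2 /= => h.
have -> : a = 0 by nra.
by have -> : b = 0 by nra.
Qed.

Lemma mulcJ z : z * conjc z = (normc2 z)%:C.
Proof.
by case: z => a b; apply/eqP; rewrite /normc2 eq_complex /=; apply/andP; split; apply/eqP; ring.
Qed.

Lemma sqrRe_le_normc2 z : complex.Re z ^+ 2 <= normc2 z.
Proof. by case: z => a b; rewrite /normc2 /=; nra. Qed.

Lemma sqrIm_le_normc2 z : complex.Im z ^+ 2 <= normc2 z.
Proof. by case: z => a b; rewrite /normc2 /=; nra. Qed.

(* Inside ring-scope notations [x^*] parses as [Num.conj]; stating these laws
   for [conjc], the conjugation of Defs, keeps rewriting syntactic. *)
Lemma conjcD x y : conjc (x + y) = conjc x + conjc y.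
Proof. exact: rmorphD. Qed.

Lemma conjcN x : conjc (- x) = - conjc x.
Proof. exact: rmorphN. Qed.

Lemma conjcM x y : conjc (x * y) = conjc x * conjc y.
Proof. exact: rmorphM. Qed.

Lemma realcM r e : (r * e)%:C = r%:C * e%:C :> C.
Proof. exact: rmorphM. Qed.

Lemma ReD x y : complex.Re (x + y) = complex.Re x + complex.Re y.
Proof. by case: x => a b; case: y. Qed.

Lemma ReMr r z : complex.Re (r%:C * z) = r * complex.Re z.
Proof. by case: z => a b /=; ring. Qed.

Lemma Re_iM z : complex.Re ('i * z) = - complex.Im z.
Proof. by case: z => a b /=; ring. Qed.

Lemma ReJ z : complex.Re (conjc z) = complex.Re z.
Proof. by case: z. Qed.

Lemma ge0_realcE z : 0 <= z -> z = (complex.Re z)%:C.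
Proof. by case: z => a b; rewrite lecE /= => /andP[/eqP -> _]. Qed.

Lemma ge0_Re z : 0 <= z -> 0 <= complex.Re z.
Proof. by case: z => a b; rewrite lecE /= => /andP[]. Qed.

Lemma ltc_normE z e : 0 < e -> (`|z| < e%:C) = (normc2 z < e ^+ 2).
Proof.
move=> he; have E : (normc2 z)%:C = `|z| ^+ 2 by rewrite -add_Re2_Im2.
rewrite -ltcR E rmorphXn /= ltr_pXn2r // nnegrE ?normr_ge0 //.
by rewrite ler0c ltW.
Qed.

Lemma ltc_realc0 e : 0 < e -> (0 : C) < e%:C.
Proof. by rewrite ltcR. Qed.

End ComplexSquaredNorm.

Lemma le0_lt_pos (R : realFieldType) (x : R) : (forall e, 0 < e -> x < e) -> x <= 0.
Proof. by move=> h; apply/ler_addgt0Pr => e /h /ltW; rewrite add0r. Qed.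

Section ComplexLimits.
Variable R : realType.
Local Notation C := R[i].
Implicit Types (s t : nat -> C) (l m : C).

Definition cvgc s l := forall e : R, 0 < e ->
  exists N, forall n, (N <= n)%N -> normc2 (s n - l) < e.

Lemma cvgc_cst l : cvgc (fun=> l) l.
Proof. by move=> e he; exists 0%N => n _; rewrite subrr normc2R expr0n. Qed.

Lemma eq_cvgc s t l : (forall n, s n = t n) -> cvgc s l -> cvgc t l.
Proof. by move=> E hs e /hs[N hN]; exists N => n /hN; rewrite E. Qed.

Lemma cvgc_subr s l : cvgc s l <-> cvgc (fun n => s n - l) 0.
Proof. by split=> hs e /hs[N hN]; exists N => n /hN; rewrite subr0. Qed.

Lemma cvgcD s t l m : cvgc s l -> cvgc t m -> cvgc (fun n => s n + t n) (l + m).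
Proof.
move=> hs ht e he; have he4 : 0 < e / 4 by rewrite divr_gt0.
have [N1 h1] := hs _ he4; have [N2 h2] := ht _ he4.
exists (maxn N1 N2) => n; rewrite geq_max => /andP[/h1 hn1 /h2 hn2].
have -> : s n + t n - (l + m) = (s n - l) + (t n - m) by ring.
by have := normc2D (s n - l) (t n - m); lra.
Qed.

Lemma cvgcMl (a : C) s l : cvgc s l -> cvgc (fun n => a * s n) (a * l).
Proof.
move=> hs e he; have ha := normc2_ge0 a.
have [N hN] := hs _ (divr_gt0 he (ltr_pwDr ltr01 ha)); exists N => n /hN.
rewrite ltr_pdivlMr ?ltr_pwDr // -mulrBr normc2M.
by have := normc2_ge0 (s n - l); nra.
Qed.

Lemma cvgcN s l : cvgc s l -> cvgc (fun n => - s n) (- l).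
Proof. by move=> hs e /hs[N hN]; exists N => n /hN; rewrite -opprD normc2N. Qed.

Lemma cvgcB s t l m : cvgc s l -> cvgc t m -> cvgc (fun n => s n - t n) (l - m).
Proof. by move=> hs /cvgcN; apply: cvgcD. Qed.

Lemma cvgcM0 s t : cvgc s 0 -> cvgc t 0 -> cvgc (fun n => s n * t n) 0.
Proof.
move=> hs ht e he.
have [N1 h1] := hs _ ltr01; have [N2 h2] := ht _ he.
exists (maxn N1 N2) => n; rewrite geq_max => /andP[/h1 hn1 /h2 hn2].
move: hn1 hn2; rewrite !subr0 normc2M.
by have := normc2_ge0 (s n); have := normc2_ge0 (t n); nra.
Qed.

Lemma cvgcM s t l m : cvgc s l -> cvgc t m -> cvgc (fun n => s n * t n) (l * m).
Proof.
move=> /cvgc_subr hs /cvgc_subr ht; apply/cvgc_subr.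
have := cvgcD (cvgcD (cvgcM0 hs ht) (cvgcMl l ht)) (cvgcMl m hs).
by rewrite !mulr0 !addr0; apply: eq_cvgc => n; ring.
Qed.

Lemma cvgcJ s l : cvgc s l -> cvgc (fun n => conjc (s n)) (conjc l).
Proof. by move=> hs e /hs[N hN]; exists N => n /hN; rewrite -conjcN -conjcD normc2J. Qed.

Lemma cvgc_unique s l m : cvgc s l -> cvgc s m -> l = m.
Proof.
move=> hl hm; apply/eqP; rewrite -subr_eq0; apply/eqP/normc2_eq0.
apply/eqP; rewrite eq_le normc2_ge0 andbT; apply: le0_lt_pos => e he.
have he4 : 0 < e / 4 by rewrite divr_gt0.
have [N1 h1] := hl _ he4; have [N2 h2] := hm _ he4.
have := h1 _ (leq_maxl N1 N2); have := h2 _ (leq_maxr N1 N2).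
set x := s _; have := normc2D (x - m) (- (x - l)).
have -> : x - m + - (x - l) = l - m by ring.
by rewrite normc2N; lra.
Qed.

Lemma cvgc_ge0 s l : (forall n, 0 <= s n) -> cvgc s l -> 0 <= l.
Proof.
move=> hp hs; have ReB n : complex.Re (s n - l) = complex.Re (s n) - complex.Re l.
  by case: (s n) => ? ?; case: (l).
have hIm : complex.Im l = 0.
  apply/eqP; rewrite -sqrf_eq0 eq_le sqr_ge0 andbT; apply: le0_lt_pos => e he.
  have [N h] := hs _ he; have := h N (leqnn N); have := sqrIm_le_normc2 (s N - l).
  have := hp N; rewrite lecE => /andP[/eqP hI _].
  have -> : complex.Im (s N - l) = - complex.Im l.
    by move: hI; case: (s N) => a b /= ->; rewrite raddfB /= add0r.
  by rewrite sqrrN; lra.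
rewrite lecE hIm eqxx /= leNgt; apply/negP => hlt.
have : 0 < complex.Re l ^+ 2 by rewrite -sqrrN exprn_gt0 // oppr_gt0.
move=> /hs[N h].
have := h N (leqnn N); have := sqrRe_le_normc2 (s N - l); rewrite ReB.
have := hp N; rewrite lecE => /andP[_]; set a := complex.Re (s N).
nra.
Qed.

Lemma ler_cvgc s t l m : (forall n, s n <= t n) -> cvgc s l -> cvgc t m -> l <= m.
Proof.
move=> hst hs ht; rewrite -subr_ge0.
by apply: cvgc_ge0 (cvgcB ht hs) => n; rewrite subr_ge0.
Qed.

Lemma cvgc_normE s l : cvgc s l <->
  (forall e : R, 0 < e -> exists N, forall n, (N <= n)%N -> `|s n - l| < e%:C).
Proof.
split=> hs e he.
  have [N hN] := hs _ (exprn_gt0 2 he); exists N => n /hN.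
  by rewrite ltc_normE.
have hm : 0 < Num.min e 1 by rewrite lt_min he ltr01.
have [N hN] := hs _ hm; exists N => n /hN; rewrite ltc_normE //.
have : Num.min e 1 <= e by rewrite ge_min lexx.
have : Num.min e 1 <= 1 by rewrite ge_min lexx orbT.
by move: hm; set x := Num.min e 1; nra.
Qed.

End ComplexLimits.

Lemma quad_ge0_le (R : realFieldType) (A B n : R) : 0 <= A -> 0 <= B ->
  (forall t, 0 <= A - 2 * t * n + t ^+ 2 * n * B) -> n <= A * B.
Proof.
move=> hA hB h; have [B0|Bpos] := eqVneq B 0.
  have [n0|n_neq0] := eqVneq n 0; first by rewrite n0 mulr_ge0.
  have := h ((A + 1) / n); rewrite B0 mulr0 addr0.
  have : (A + 1) / n * n = A + 1 by rewrite divfK.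
  by set q := _ / n; nra.
have hB' : 0 < B by rewrite lt_def Bpos.
have hq : B^-1 * B = 1 by rewrite mulVf.
have := mulr_ge0 (h B^-1) (ltW hB'); set q := B^-1.
have -> : (A - 2 * q * n + q ^+ 2 * n * B) * B = A * B - n * (q * B) * (2 - q * B) by ring.
by rewrite hq; lra.
Qed.

Section CauchySchwarz.
Variable R : realType.
Local Notation C := R[i].
Variables (W : lmodType C) (b : W -> W -> C) (P : W -> Prop).
Hypothesis b_linear : forall a x y z, b (a *: x + y) z = a * b x z + b y z.
Hypothesis P_linear : forall a x y, P x -> P y -> P (a *: x + y).
Hypothesis b_hermitian : forall x y, P x -> P y -> b y x = conjc (b x y).
Hypothesis b_ge0 : forall x, P x -> 0 <= b x x.

Lemma b_antilinear x y z a : P x -> P y -> P z ->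
  b z (a *: x + y) = conjc a * b z x + b z y.
Proof.
move=> hx hy hz; rewrite (b_hermitian (P_linear a hx hy) hz) b_linear.
by rewrite (b_hermitian hz hx) (b_hermitian hz hy) conjcD conjcM !conjcK.
Qed.

Lemma cauchy_schwarz x y : P x -> P y ->
  normc2 (b x y) <= complex.Re (b x x) * complex.Re (b y y).
Proof.
move=> hx hy; set beta := b x y; set A := complex.Re (b x x); set B := complex.Re (b y y).
have hA : 0 <= A by apply/ge0_Re/b_ge0.
apply: quad_ge0_le => // [|t]; first exact/ge0_Re/b_ge0.
have := b_ge0 (P_linear (- (t%:C * beta)) hy hx).
rewrite b_linear !b_antilinear // (ge0_realcE (b_ge0 hx)) (ge0_realcE (b_ge0 hy)).
rewrite -/A -/B (b_hermitian hx hy) -/beta conjcN conjcM conjc_real.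
have -> : - (t%:C * beta) * (- (t%:C * conjc beta) * B%:C + conjc beta) +
   (- (t%:C * conjc beta) * beta + A%:C) =
   A%:C - 2%:R * t%:C * (beta * conjc beta) + t%:C ^+ 2 * (beta * conjc beta) * B%:C by ring.
rewrite mulcJ; set n := normc2 beta; have -> : A%:C - 2%:R * t%:C * n%:C + t%:C ^+ 2 * n%:C * B%:C =
    (A - 2 * t * n + t ^+ 2 * n * B)%:C :> C.
  by apply/eqP; rewrite eq_complex /=; apply/andP; split; apply/eqP; ring.
by rewrite ler0c.
Qed.

End CauchySchwarz.

Section InnerProductSpace.
Variable R : realType.
Local Notation C := R[i].
Variables (U : lmodType C) (ip : U -> U -> C).
Hypothesis hip : inner_product ip.
Implicit Types (x y z : U) (u w : nat -> U).

Lemma ipDZl a x y z : ip (a *: x + y) z = a * ip x z + ip y z.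
Proof. by case: hip => h _ _ _; apply: h. Qed.
Lemma ipC x y : ip y x = conjc (ip x y).
Proof. by case: hip => _ h _ _; apply: h. Qed.
Lemma ip_ge0 x : 0 <= ip x x.
Proof. by case: hip => _ _ h _; apply: h. Qed.
Lemma ip_eq0 x : ip x x = 0 -> x = 0.
Proof. by case: hip => _ _ _ h; apply: h. Qed.

Lemma ipDl x y z : ip (x + y) z = ip x z + ip y z.
Proof. by rewrite -[x]scale1r ipDZl mul1r scale1r. Qed.
Lemma ip0l z : ip 0 z = 0.
Proof. by apply: (addrI (ip 0 z)); rewrite -ipDl !addr0. Qed.
Lemma ipZl a x z : ip (a *: x) z = a * ip x z.
Proof. by rewrite -[a *: x]addr0 ipDZl ip0l addr0. Qed.
Lemma ipNl x z : ip (- x) z = - ip x z.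
Proof. by rewrite -scaleN1r ipZl mulN1r. Qed.
Lemma ipBl x y z : ip (x - y) z = ip x z - ip y z.
Proof. by rewrite ipDl ipNl. Qed.
Lemma ipDr x y z : ip z (x + y) = ip z x + ip z y.
Proof. by rewrite ipC ipDl conjcD -!ipC. Qed.
Lemma ipZr a x z : ip z (a *: x) = conjc a * ip z x.
Proof. by rewrite ipC ipZl conjcM -ipC. Qed.
Lemma ip0r z : ip z 0 = 0.
Proof. by rewrite ipC ip0l conjc0. Qed.
Lemma ipNr x z : ip z (- x) = - ip z x.
Proof. by rewrite ipC ipNl conjcN -ipC. Qed.
Lemma ipBr x y z : ip z (x - y) = ip z x - ip z y.
Proof. by rewrite ipDr ipNr. Qed.

Definition sqnorm x := complex.Re (ip x x).

Lemma sqnormE x : ip x x = (sqnorm x)%:C.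
Proof. exact: ge0_realcE (ip_ge0 x). Qed.
Lemma sqnorm_ge0 x : 0 <= sqnorm x.
Proof. exact: ge0_Re (ip_ge0 x). Qed.
Lemma sqnorm_eq0 x : sqnorm x = 0 -> x = 0.
Proof. by move=> h; apply: ip_eq0; rewrite sqnormE h. Qed.
Lemma sqnorm0 : sqnorm 0 = 0.
Proof. by rewrite /sqnorm ip0l. Qed.
Lemma sqnormN x : sqnorm (- x) = sqnorm x.
Proof. by rewrite /sqnorm ipNl ipNr opprK. Qed.
Lemma sqnormZ a x : sqnorm (a *: x) = normc2 a * sqnorm x.
Proof. by rewrite /sqnorm ipZl ipZr mulrA mulcJ sqnormE /=; ring. Qed.

Lemma sqnormDZr (t : R) x y :
  sqnorm (t%:C *: x + y) = t ^+ 2 * sqnorm x + 2 * t * complex.Re (ip x y) + sqnorm y.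
Proof.
rewrite /sqnorm !(ipDl, ipDr, ipZl, ipZr) conjc_real !ReD !ReMr.
by rewrite [ip y x]ipC ReJ /sqnorm; ring.
Qed.

Lemma ip_cauchy_schwarz x y : normc2 (ip x y) <= sqnorm x * sqnorm y.
Proof.
apply: (@cauchy_schwarz R U ip (fun=> True)) => //.
- exact: ipDZl.
- by move=> *; apply: ipC.
- by move=> *; apply: ip_ge0.
Qed.

Lemma sqnorm_parallelogram x y :
  sqnorm (x + y) + sqnorm (x - y) = 2 * sqnorm x + 2 * sqnorm y.
Proof.
have : ip (x + y) (x + y) + ip (x - y) (x - y) = 2%:R * ip x x + 2%:R * ip y y.
  by rewrite !ipDl !ipNl !ipDr !ipNr; ring.
by rewrite !sqnormE => /(congr1 (@complex.Re R)) /= ->; ring.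
Qed.

Lemma sqnormD x y : sqnorm (x + y) <= 2 * sqnorm x + 2 * sqnorm y.
Proof. by have := sqnorm_parallelogram x y; have := sqnorm_ge0 (x - y); lra. Qed.

Lemma sqnormB_trans x y z : sqnorm (x - z) <= 2 * sqnorm (x - y) + 2 * sqnorm (y - z).
Proof. by rewrite -[x - z](subrKA y); apply: sqnormD. Qed.

Definition cvgv u x := forall e : R, 0 < e ->
  exists N, forall n, (N <= n)%N -> sqnorm (u n - x) < e.

Definition cauchyv u := forall e : R, 0 < e ->
  exists N, forall n m, (N <= n)%N -> (N <= m)%N -> sqnorm (u n - u m) < e.

Lemma ltc_sqnorm x e : (`|ip x x| < e%:C) = (sqnorm x < e).
Proof. by rewrite sqnormE ger0_norm ?ler0c ?sqnorm_ge0 // ltcR. Qed.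

Lemma converges_toE u x : converges_to ip u x <-> cvgv u x.
Proof. by split=> h e /h[N hN]; exists N => n /hN; rewrite ltc_sqnorm. Qed.

Lemma cauchy_seqE u : cauchy_seq ip u <-> cauchyv u.
Proof. by split=> h e /h[N hN]; exists N => n m /hN hn /hn; rewrite ltc_sqnorm. Qed.

Lemma cvgv_cauchy u x : cvgv u x -> cauchyv u.
Proof.
move=> h e he; have [N hN] := h _ (divr_gt0 he (ltr0Sn _ 3)).
exists N => n m /hN hn /hN hm; have := sqnormB_trans (u n) x (u m).
by rewrite -sqnormN opprB in hm; lra.
Qed.

Lemma cvgv_cst x : cvgv (fun=> x) x.
Proof. by move=> e he; exists 0%N => n _; rewrite subrr sqnorm0. Qed.

Lemma cvgv_subr u x : cvgv u x -> cvgv (fun n => u n - x) 0.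
Proof. by move=> h e /h[N hN]; exists N => n; rewrite subr0; apply: hN. Qed.

Lemma cvgc_ip0 u w : cvgv u 0 -> cvgv w 0 -> cvgc (fun n => ip (u n) (w n)) 0.
Proof.
move=> hu hw e he; have [N1 h1] := hu _ ltr01; have [N2 h2] := hw _ he.
exists (maxn N1 N2) => n; rewrite geq_max => /andP[/h1 hn1 /h2 hn2].
move: hn1 hn2; rewrite !subr0; have := ip_cauchy_schwarz (u n) (w n).
by have := sqnorm_ge0 (u n); have := sqnorm_ge0 (w n); nra.
Qed.

Lemma cvgc_ip0l u y : cvgv u 0 -> cvgc (fun n => ip (u n) y) 0.
Proof.
move=> hu e he; have hy := sqnorm_ge0 y.
have [N hN] := hu _ (divr_gt0 he (ltr_pwDr ltr01 hy)); exists N => n /hN.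
rewrite !subr0 ltr_pdivlMr ?ltr_pwDr //.
by have := ip_cauchy_schwarz (u n) y; have := sqnorm_ge0 (u n); nra.
Qed.

Lemma cvgc_ip0r u y : cvgv u 0 -> cvgc (fun n => ip y (u n)) 0.
Proof.
move=> /(cvgc_ip0l y)/cvgcJ; rewrite conjc0.
by apply: eq_cvgc => n; rewrite -ipC.
Qed.

Lemma cvgc_ip u x w y : cvgv u x -> cvgv w y ->
  cvgc (fun n => ip (u n) (w n)) (ip x y).
Proof.
move=> /cvgv_subr hu /cvgv_subr hw; apply/cvgc_subr.
have := cvgcD (cvgcD (cvgc_ip0 hu hw) (cvgc_ip0l y hu)) (cvgc_ip0r x hw).
by rewrite !addr0; apply: eq_cvgc => n; rewrite !ipBl !ipBr; ring.
Qed.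

Lemma ip_cvgv_eq0r x u y : (forall n, ip x (u n) = 0) -> cvgv u y -> ip x y = 0.
Proof.
move=> h0 hu; apply: (cvgc_unique (cvgc_ip (cvgv_cst x) hu)).
by apply: eq_cvgc (cvgc_cst 0) => n; rewrite h0.
Qed.

End InnerProductSpace.

Lemma invSn_lt (R : archiFieldType) (e : R) : 0 < e ->
  exists N, forall n, (N <= n)%N -> n.+1%:R^-1 < e.
Proof.
move=> he; have /archi_boundP hN : 0 <= e^-1 by rewrite invr_ge0 ltW.
exists (Num.bound e^-1) => n hn; rewrite -ltf_pV2 ?posrE ?invr_gt0 //.
by rewrite invrK (lt_le_trans hN) // ler_nat (leq_trans hn).
Qed.

Lemma quad_ge0_eq0 (R : realFieldType) (a b : R) : 0 <= a ->
  (forall t, 0 <= t ^+ 2 * a + 2 * t * b) -> b = 0.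
Proof.
move=> ha h; have ha1 : 0 < a + 1 by lra.
have := h (- b / (a + 1)); set t := - b / (a + 1).
have ht : t * (a + 1) = - b by rewrite divfK ?gt_eqF.
have -> : t ^+ 2 * a + 2 * t * b = - (t ^+ 2 * (a + 2)).
  by rewrite -[b]opprK -ht; ring.
rewrite oppr_ge0 pmulr_lle0 ?sqrf_eq0; last lra.
rewrite le_eqVlt ltNge sqr_ge0 orbF sqrf_eq0 => /eqP t0.
by rewrite -[b]opprK -ht t0 mul0r oppr0.
Qed.

Lemma cvgc_Re (R : realType) (s : nat -> R[i]) l e : cvgc s l -> 0 < e ->
  exists N, forall n, (N <= n)%N -> `|complex.Re (s n) - complex.Re l| < e.
Proof.
move=> hs he; have [N hN] := hs _ (exprn_gt0 2 he); exists N => n /hN.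
have := sqrRe_le_normc2 (s n - l).
have -> : complex.Re (s n - l) = complex.Re (s n) - complex.Re l.
  by case: (s n) => ? ?; case: (l).
set x := _ - _ => h1 h2; rewrite ltr_norml.
by apply/andP; split; nra.
Qed.

Section RieszRepresentation.
Variable R : realType.
Local Notation C := R[i].
Variables (K : lmodType C) (ipK : K -> K -> C).
Hypothesis hK : hilbert_space ipK.
Variable P : K -> C -> Prop.
Hypothesis P00 : P 0 0.
Hypothesis P_linear : forall a m z m' z', P m z -> P m' z' -> P (a *: m + m') (a * z + z').
Variable B : R.
Hypothesis B_ge0 : 0 <= B.
Hypothesis P_bounded : forall m z, P m z -> normc2 z <= B * sqnorm ipK m.

Let hip : inner_product ipK := proj1 hK.

(* The representing vector is the limit of a minimizing sequence for the energy
   ||m||^2 - 2 Re z on the graph of the functional; the parallelogram law makes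
   every minimizing sequence Cauchy. *)
Let energy (m : K) (z : C) : R := sqnorm ipK m - 2 * complex.Re z.

Lemma energy_ge m z : P m z -> - B <= energy m z.
Proof.
move=> /P_bounded; rewrite /energy.
have := sqrRe_le_normc2 z; have := sqnorm_ge0 hip m; have := B_ge0.
move: (normc2 z) (complex.Re z) (sqnorm ipK m) => n r x hB hx hr h.
suff : 2 * r <= x + B by lra.
rewrite leNgt; apply/negP => hlt.
have : 0 < (2 * r - (x + B)) * (2 * r + (x + B)) by apply: mulr_gt0; lra.
by have := sqr_ge0 (x - B); nra.
Qed.

Let energies : set R := fun r => exists m z, P m z /\ r = - energy m z.
Let inf_energy := - sup energies.

Lemma has_sup_energies : has_sup energies.
Proof.
split; first by exists 0, 0, 0; split; rewrite // /energy sqnorm0 //= mulr0 subr0 oppr0.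
by exists B => _ [m [z [/energy_ge h ->]]]; rewrite lerNl.
Qed.

Lemma energy_ge_inf m z : P m z -> inf_energy <= energy m z.
Proof.
move=> h; rewrite lerNl; apply: sup_upper_bound has_sup_energies _ _.
by exists m, z.
Qed.

Lemma exists_near_minimizer j : exists p : K * C,
  P p.1 p.2 /\ energy p.1 p.2 < inf_energy + j.+1%:R^-1.
Proof.
have hj : 0 < j.+1%:R^-1 :> R by rewrite invr_gt0.
have [_ [m [z [hP ->]]] hr] := sup_adherent hj has_sup_energies.
exists (m, z); split => //=; rewrite /inf_energy.
by move: hr; move: (j.+1%:R^-1) => a; lra.
Qed.

Let mz := projT1 (choice exists_near_minimizer).
Let mz_spec := projT2 (choice exists_near_minimizer).
Let ms j := (mz j).1.

Lemma P_scale a m z : P m z -> P (a *: m) (a * z).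
Proof. by move=> h; have := P_linear a h P00; rewrite !addr0. Qed.

Lemma minimizing_cauchy : cauchyv ipK ms.
Proof.
move=> e he; have [N hN] := invSn_lt (divr_gt0 he (ltr0Sn R 3)).
exists N => i j /hN hi /hN hj.
have [hPi hEi] := mz_spec i; have [hPj hEj] := mz_spec j.
have := energy_ge_inf (P_scale (2^-1)%:C (P_linear 1 hPi hPj)).
move: hEi hEj hi hj; rewrite /energy scale1r mul1r sqnormZ // normc2R ReMr ReD.
have := sqnorm_parallelogram hip (ms i) (ms j).
by move: (i.+1%:R^-1) (j.+1%:R^-1) => di dj; lra.
Qed.

Lemma riesz_representation : exists k,
  [/\ exists ms : nat -> K, (forall j, exists z, P (ms j) z) /\ cvgv ipK ms k,
      forall m z, P m z -> ipK m k = z & sqnorm ipK k <= B].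
Proof.
have [k /(converges_toE hip) hk] :=
  proj2 hK ms (proj2 (cauchy_seqE hip ms) minimizing_cauchy).
have hms j : P (ms j) (mz j).2 := (mz_spec j).1.
have Re_repr m z : P m z -> complex.Re (ipK m k) = complex.Re z.
  move=> hP; apply/eqP; rewrite -subr_eq0; apply/eqP.
  apply: (quad_ge0_eq0 (sqnorm_ge0 hip m)) => t.
  rewrite -oppr_le0; apply: le0_lt_pos => e he; have he4 : 0 < e / 4 by rewrite divr_gt0.
  have [N1 h1] := cvgc_Re (cvgcMl t%:C (cvgc_ip hip (cvgv_cst hip m) hk)) he4.
  have [N2 h2] := invSn_lt he4.
  have := h1 _ (leq_maxl N1 N2); have := h2 _ (leq_maxr N1 N2).
  have [_] := mz_spec (maxn N1 N2); have := energy_ge_inf (P_linear t%:C hP (hms (maxn N1 N2))).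
  rewrite /energy (sqnormDZr hip) ReD !ReMr ltr_norml -/mz -/(ms _).
  by move: (_.+1%:R^-1) => d; lra.
have repr m z : P m z -> ipK m k = z.
  move=> hP; have := Re_repr _ _ (P_scale 'i hP); rewrite (ipZl hip) !Re_iM => /oppr_inj.
  by case: (ipK m k) (Re_repr _ _ hP) => a b; case: z {hP} => c d /= -> ->.
exists k; split => //; first by exists ms; split=> // j; exists (mz j).2.
have hc := cvgc_ip hip hk (cvgv_cst hip k).
have hle n : ipK (ms n) k * conjc (ipK (ms n) k) <= B%:C * ipK (ms n) (ms n).
  by rewrite (repr _ _ (hms n)) mulcJ (sqnormE hip) -realcM lecR; apply: P_bounded.
have := ler_cvgc hle (cvgcM hc (cvgcJ hc)) (cvgcMl _ (cvgc_ip hip hk hk)).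
rewrite mulcJ (sqnormE hip) normc2R -realcM lecR expr2.
have [->|k_neq0] := eqVneq (sqnorm ipK k) 0; first by [].
by rewrite ler_pM2r // lt_def k_neq0 sqnorm_ge0.
Qed.

End RieszRepresentation.

Section ProductSpace.
Variable R : realType.
Local Notation C := R[i].
Variables (V K : lmodType C) (ip : V -> V -> C) (ipK : K -> K -> C).
Hypotheses (hV : hilbert_space ip) (hK : hilbert_space ipK).
Let hipV : inner_product ip := proj1 hV.
Let hipK : inner_product ipK := proj1 hK.

Definition ip_prod (p q : V * K) : C := ip p.1 q.1 + ipK p.2 q.2.

Lemma sqnorm_prod p : sqnorm ip_prod p = sqnorm ip p.1 + sqnorm ipK p.2.
Proof. exact: ReD. Qed.

Lemma inner_product_prod : inner_product ip_prod.
Proof.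
split.
- by move=> a x y z; rewrite /ip_prod /= (ipDZl hipV) (ipDZl hipK); ring.
- by move=> x y; rewrite /ip_prod conjcD -(ipC hipV) -(ipC hipK).
- by move=> x; apply: addr_ge0; [exact: (ip_ge0 hipV) | exact: (ip_ge0 hipK)].
move=> [x y] /(congr1 (@complex.Re R)); rewrite ReD /= => h.
have hx := sqnorm_ge0 hipV x; have hy := sqnorm_ge0 hipK y.
have hx0 : sqnorm ip x = 0 by rewrite /sqnorm; lra.
have hy0 : sqnorm ipK y = 0 by rewrite /sqnorm; lra.
by rewrite (sqnorm_eq0 hipV hx0) (sqnorm_eq0 hipK hy0).
Qed.

Lemma cvgv_fst u p : cvgv ip_prod u p -> cvgv ip (fun n => (u n).1) p.1.
Proof.
move=> h e /h[N hN]; exists N => n /hN; rewrite sqnorm_prod.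
by have := sqnorm_ge0 hipK ((u n).2 - p.2); rewrite /=; lra.
Qed.

Lemma cvgv_snd u p : cvgv ip_prod u p -> cvgv ipK (fun n => (u n).2) p.2.
Proof.
move=> h e /h[N hN]; exists N => n /hN; rewrite sqnorm_prod.
by have := sqnorm_ge0 hipV ((u n).1 - p.1); rewrite /=; lra.
Qed.

Lemma hilbert_space_prod : hilbert_space ip_prod.
Proof.
split; first exact: inner_product_prod.
move=> u /(cauchy_seqE inner_product_prod) hu.
have h1 : cauchyv ip (fun n => (u n).1).
  move=> e /hu[N hN]; exists N => n m hn hm; have := hN n m hn hm.
  by rewrite sqnorm_prod /=; have := sqnorm_ge0 hipK ((u n).2 - (u m).2); lra.
have h2 : cauchyv ipK (fun n => (u n).2).
  move=> e /hu[N hN]; exists N => n m hn hm; have := hN n m hn hm.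
  by rewrite sqnorm_prod /=; have := sqnorm_ge0 hipV ((u n).1 - (u m).1); lra.
have [f /(converges_toE hipV) hf] := proj2 hV _ (proj2 (cauchy_seqE hipV _) h1).
have [g /(converges_toE hipK) hg] := proj2 hK _ (proj2 (cauchy_seqE hipK _) h2).
exists (f, g); apply/(converges_toE inner_product_prod) => e he.
have he2 : 0 < e / 2 by rewrite divr_gt0.
have [N1 hN1] := hf _ he2; have [N2 hN2] := hg _ he2.
exists (maxn N1 N2) => n; rewrite geq_max => /andP[/hN1 + /hN2].
by rewrite sqnorm_prod /=; lra.
Qed.

End ProductSpace.

Section Projection.
Variable R : realType.
Local Notation C := R[i].
Variables (U : lmodType C) (ip : U -> U -> C).
Hypothesis hU : hilbert_space ip.
Let hip : inner_product ip := proj1 hU.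
Variable M : U -> Prop.
Hypothesis M0 : M 0.
Hypothesis M_linear : forall a x y, M x -> M y -> M (a *: x + y).

Lemma exists_orthogonal_projection x : exists p,
  (exists ms : nat -> U, (forall j, M (ms j)) /\ cvgv ip ms p) /\
  (forall m, M m -> ip m p = ip m x).
Proof.
pose P m z := M m /\ z = ip m x.
have P00 : P 0 0 by split; rewrite // (ip0l hip).
have P_linear a m z m' z' : P m z -> P m' z' -> P (a *: m + m') (a * z + z').
  by move=> [hm ->] [hm' ->]; split; [apply: M_linear | rewrite (ipDZl hip)].
have P_bounded m z : P m z -> normc2 z <= sqnorm ip x * sqnorm ip m.
  by move=> [_ ->]; rewrite mulrC; apply: ip_cauchy_schwarz.
have [p [[ms [hms hl]] hr _]] :=
  riesz_representation hU P00 P_linear (sqnorm_ge0 hip x) P_bounded.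
exists p; split; last by move=> m hm; apply: hr.
by exists ms; split => // j; have [z []] := hms j.
Qed.

End Projection.

Section Adjoint.
Variable R : realType.
Local Notation C := R[i].
Variables (A B : lmodType C) (ipA : A -> A -> C) (ipB : B -> B -> C).
Hypotheses (hA : inner_product ipA) (hB : inner_product ipB).
Variable T : A -> B -> Prop.

Lemma adjoint_linear a h k h' k' : adjoint ipA ipB T h k -> adjoint ipA ipB T h' k' ->
  adjoint ipA ipB T (a *: h + h') (a *: k + k').
Proof.
move=> H1 H2 f g hfg.
by rewrite (ipDr hB) (ipZr hB) (ipDr hA) (ipZr hA) (H1 _ _ hfg) (H2 _ _ hfg).
Qed.

Lemma adjoint00 : adjoint ipA ipB T 0 0.
Proof. by move=> f g _; rewrite (ip0r hA) (ip0r hB). Qed.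

Lemma adjointB h k h' k' : adjoint ipA ipB T h k -> adjoint ipA ipB T h' k' ->
  adjoint ipA ipB T (h - h') (k - k').
Proof.
move=> H1 H2; have := adjoint_linear 1 H1 (adjoint_linear (-1) H2 adjoint00).
by rewrite !scale1r !scaleN1r !addr0.
Qed.

Lemma adjoint_closed hs ks h k : (forall n, adjoint ipA ipB T (hs n) (ks n)) ->
  cvgv ipB hs h -> cvgv ipA ks k -> adjoint ipA ipB T h k.
Proof.
move=> H hh hk f g hfg; apply: (cvgc_unique (cvgc_ip hB (cvgv_cst hB g) hh)).
by apply: eq_cvgc (cvgc_ip hA (cvgv_cst hA f) hk) => n; rewrite (H n f g hfg).
Qed.

End Adjoint.

Lemma ltc_norm_realc (R : realType) (r e : R) : 0 < e -> (`|r%:C| < e%:C) = (`|r| < e).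
Proof.
move=> he; rewrite ltc_normE // normc2R ltr_norml.
by apply/idP/andP => [h|[h1 h2]]; [split|]; nra.
Qed.

Lemma closed_form_cst (R : realType) (V : lmodType R[i]) (ip : V -> V -> R[i])
  (T : V -> V -> Prop) f f' : inner_product ip -> T f f' -> closed_form ip T f (ip f' f).
Proof.
move=> hip hT; exists (fun=> f), (fun=> f'); split => //.
- exact/(converges_toE hip)/cvgv_cst.
- by move=> e he; exists 0%N => n m _ _; rewrite !subrr (ip0l hip) normr0 ltc_realc0.
- by move=> e he; exists 0%N => n _; rewrite subrr normr0 ltc_realc0.
Qed.

Section KreinExtension.
Variable R : realType.
Local Notation C := R[i].
Variables (V : lmodType C) (ip : V -> V -> C) (K : lmodType C) (ipK : K -> K -> C)
  (S : V -> V -> Prop) (c : R) (Q : V -> K).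
Hypotheses (hV : hilbert_space ip) (hK : hilbert_space ipK).
Hypotheses (hS : linear_rel S) (hQ : representing_map ip ipK S c Q).
Let hipV : inner_product ip := proj1 hV.
Let hipK : inner_product ipK := proj1 hK.

Local Notation Jadj := (adjoint ipK ip (companion S c Q)).
Local Notation Jadj2 := (adjoint ip ipK Jadj).
Local Notation SK := (krein_ext ip ipK S c Q).

Lemma krein_extP f w :
  SK f w <-> exists k g, [/\ Jadj f k, Jadj2 k g & w = g + c%:C *: f].
Proof.
split; first by move=> [g [[k [h1 h2]] ->]]; exists k, g.
by move=> [k [g [h1 h2 ->]]]; exists g; split => //; exists k.
Qed.

Lemma krein_formE f k g : Jadj f k -> Jadj2 k g ->
  ip (g + c%:C *: f) f = c%:C * ip f f + ipK k k.
Proof.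
move=> hT hA; rewrite (ipDl hipV) (ipZl hipV) (ipC hipV f g) -(hA _ _ hT).
by rewrite (sqnormE hipK) conjc_real addrC.
Qed.

Lemma krein_formB f1 k1 g1 f2 k2 g2 :
  Jadj f1 k1 -> Jadj2 k1 g1 -> Jadj f2 k2 -> Jadj2 k2 g2 ->
  ip ((g1 + c%:C *: f1) - (g2 + c%:C *: f2)) (f1 - f2) =
  c%:C * ip (f1 - f2) (f1 - f2) + ipK (k1 - k2) (k1 - k2).
Proof.
move=> hT1 hA1 hT2 hA2; rewrite opprD addrACA -scalerBr.
exact: krein_formE (adjointB hipK hipV hT1 hT2) (adjointB hipV hipK hA1 hA2).
Qed.

Lemma Jadj_kernel_perp m k g : Jadj 0 m -> Jadj2 k g -> ipK m k = 0.
Proof. by move=> hT hA; rewrite (hA _ _ hT) (ip0l hipV). Qed.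

Lemma Jadj_kernel_perp_Q m phi phi' : Jadj 0 m -> S phi phi' -> ipK (Q phi) m = 0.
Proof.
move=> hT hp; rewrite -(hT (Q phi) (phi' - c%:C *: phi)) ?(ip0r hipV) //.
by exists phi, phi'.
Qed.

Lemma representing_map0 : Q 0 = 0.
Proof.
have hd : dom S 0 by exists 0; case: hS.
have := (proj1 hQ) 1 0 0 hd hd; rewrite !scale1r addr0 => h.
by apply: (addrI (Q 0)); rewrite -h addr0.
Qed.

Lemma krein_form_cauchyP (ws : nat -> V) ks gs :
  (forall n, Jadj (ws n) (ks n)) -> (forall n, Jadj2 (ks n) (gs n)) -> cauchyv ip ws ->
  (forall e : R, 0 < e -> exists N, forall n m, (N <= n)%N -> (N <= m)%N ->
     `|ip ((gs n + c%:C *: ws n) - (gs m + c%:C *: ws m)) (ws n - ws m)| < e%:C)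
  <-> cauchyv ipK ks.
Proof.
move=> hT hA hw.
have formE n m : ip ((gs n + c%:C *: ws n) - (gs m + c%:C *: ws m)) (ws n - ws m) =
    (c * sqnorm ip (ws n - ws m) + sqnorm ipK (ks n - ks m))%:C.
  rewrite (krein_formB (hT n) (hA n) (hT m) (hA m)) (sqnormE hipV) (sqnormE hipK).
  by rewrite -realcM -rmorphD.
have hc : 0 < `|c| + 1 by rewrite ltr_pwDr.
have cx_small e x : 0 <= x -> x < e / 2 / (`|c| + 1) -> `|c * x| < e / 2.
  move=> hx; rewrite ltr_pdivlMr // normrM (ger0_norm hx) => h.
  by have := normr_ge0 c; nra.
split=> hf e he; have he2 : 0 < e / 2 by rewrite divr_gt0.
- have [N1 h1] := hf _ he2; have [N2 h2] := hw _ (divr_gt0 he2 hc).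
  exists (maxn N1 N2) => n m; rewrite !geq_max => /andP[hn1 hn2] /andP[hm1 hm2].
  have := h1 _ _ hn1 hm1; rewrite formE ltc_norm_realc // => h.
  have := cx_small _ _ (sqnorm_ge0 hipV _) (h2 _ _ hn2 hm2).
  by move: h; rewrite !ltr_norml; have := sqnorm_ge0 hipK (ks n - ks m); lra.
- have [N1 h1] := hf _ he2; have [N2 h2] := hw _ (divr_gt0 he2 hc).
  exists (maxn N1 N2) => n m; rewrite !geq_max => /andP[hn1 hn2] /andP[hm1 hm2].
  rewrite formE ltc_norm_realc //; have := h1 _ _ hn1 hm1.
  have := cx_small _ _ (sqnorm_ge0 hipV _) (h2 _ _ hn2 hm2).
  by rewrite !ltr_norml; have := sqnorm_ge0 hipK (ks n - ks m); lra.
Qed.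

Lemma exists_Jadj_repr f a : 0 <= a ->
  (forall phi phi', S phi phi' -> normc2 (ip (phi' - c%:C *: phi) f) <= a * sqnorm ipK (Q phi)) ->
  exists k, [/\ Jadj f k, sqnorm ipK k <= a & forall m, Jadj 0 m -> ipK m k = 0].
Proof.
move=> ha hb.
pose P m z := exists phi phi', [/\ S phi phi', m = Q phi & z = ip (phi' - c%:C *: phi) f].
have P00 : P 0 0.
  exists 0, 0; split; first by case: hS.
  - by rewrite representing_map0.
  - by rewrite scaler0 subr0 (ip0l hipV).
have P_linear a0 m z m' z' : P m z -> P m' z' -> P (a0 *: m + m') (a0 * z + z').
  move=> [p1 [p1' [hp1 -> ->]]] [p2 [p2' [hp2 -> ->]]].
  exists (a0 *: p1 + p2), (a0 *: p1' + p2'); split.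
  - exact: (proj2 hS).
  - by rewrite (proj1 hQ) //; [exists p1' | exists p2'].
  - by rewrite !(ipBl hipV) !(ipZl hipV) !(ipDZl hipV); ring.
have P_bounded m z : P m z -> normc2 z <= a * sqnorm ipK m.
  by move=> [p [p' [hp -> ->]]]; apply: hb.
have [k [[ms [hms hl]] hr hka]] := riesz_representation hK P00 P_linear ha P_bounded.
exists k; split => //.
  by move=> _ _ [p [p' [hp -> ->]]]; symmetry; apply: hr; exists p, p'.
move=> m hm; apply: (ip_cvgv_eq0r hipK) hl => n.
have [z [p [p' [hp -> _]]]] := hms n.
by rewrite (ipC hipK) (Jadj_kernel_perp_Q hm hp) conjc0.
Qed.

Lemma Jadj_repr_unique f k k' : Jadj f k -> Jadj f k' ->
  (forall m, Jadj 0 m -> ipK m k = 0) -> (forall m, Jadj 0 m -> ipK m k' = 0) -> k' = k.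
Proof.
move=> hT hT' hk hk'; have := adjointB hipK hipV hT' hT; rewrite subrr => hd.
apply/eqP; rewrite -subr_eq0; apply/eqP/(ip_eq0 hipK).
by rewrite (ipBr hipK) (hk' _ hd) (hk _ hd) subrr.
Qed.

Lemma krein_closed_form_value f k u : Jadj f k -> (forall m, Jadj 0 m -> ipK m k = 0) ->
  closed_form ip SK f u -> u = c%:C * ip f f + ipK k k.
Proof.
move=> hT hperp [w [w' [hSK /(converges_toE hipV) hw hcau /cvgc_normE hval]]].
have hex n : exists p : K * V, [/\ Jadj (w n) p.1, Jadj2 p.1 p.2 & w' n = p.2 + c%:C *: w n].
  by have /krein_extP[k' [g hkg]] := hSK n; exists (k', g).
have [kg hkg] := choice hex; pose ks n := (kg n).1; pose gs n := (kg n).2.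
have hTs n : Jadj (w n) (ks n) by case: (hkg n).
have hAs n : Jadj2 (ks n) (gs n) by case: (hkg n).
have ew' : w' = fun n => gs n + c%:C *: w n by apply: funext => n; case: (hkg n).
subst w'.
have hkc := proj1 (krein_form_cauchyP hTs hAs (cvgv_cauchy hipV hw)) hcau.
have [k' /(converges_toE hipK) hk'] := proj2 hK _ (proj2 (cauchy_seqE hipK _) hkc).
have hperp' m : Jadj 0 m -> ipK m k' = 0.
  by move=> hm; apply: (ip_cvgv_eq0r hipK) hk' => n; apply: Jadj_kernel_perp hm (hAs n).
rewrite -(Jadj_repr_unique hT (adjoint_closed hipK hipV hTs hw hk') hperp hperp').
apply: (cvgc_unique hval).
apply: eq_cvgc (cvgcD (cvgcMl c%:C (cvgc_ip hipV hw hw)) (cvgc_ip hipK hk' hk')) => n.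
by rewrite (krein_formE (hTs n) (hAs n)).
Qed.

Lemma krein_graph_approx f k : Jadj f k -> (forall m, Jadj 0 m -> ipK m k = 0) ->
  exists ds : nat -> V * K, [/\ forall n, Jadj (ds n).1 (ds n).2 /\ exists g, Jadj2 (ds n).2 g,
    cvgv ip (fun n => (ds n).1) f & cvgv ipK (fun n => (ds n).2) k].
Proof.
move=> hT hperp; have hP := hilbert_space_prod hV hK.
(* (f, k) minus its projection p onto D lies in the graph of J* and is orthogonal
   to D; projecting (q1, 0) onto the graph of J* yields an element of D that
   forces q1 = 0, after which q2 is orthogonal to itself. *)
pose D p := Jadj p.1 p.2 /\ exists g, Jadj2 p.2 g.
have D0 : D 0 by split; [exact: adjoint00 | exists 0; exact: adjoint00].
have D_linear a x y : D x -> D y -> D (a *: x + y).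
  move=> [hx [gx hgx]] [hy [gy hgy]]; split; first exact: adjoint_linear.
  by exists (a *: gx + gy); apply: adjoint_linear.
have [p [[ds [hds hl]] hp]] := exists_orthogonal_projection hP D0 D_linear (f, k).
have hl1 := cvgv_fst hK hl; have hl2 := cvgv_snd hV hl.
suff [ep1 ep2] : f - p.1 = 0 /\ k - p.2 = 0.
  by exists ds; split => //; [move: ep1 | move: ep2] => /eqP; rewrite subr_eq0 => /eqP ->.
have hq : Jadj (f - p.1) (k - p.2).
  apply: (adjointB hipK hipV hT).
  by apply: (adjoint_closed hipK hipV _ hl1 hl2) => n; case: (hds n).
set q1 := f - p.1 in hq *; set q2 := k - p.2 in hq *.
have q_perp x : D x -> ip x.1 q1 + ipK x.2 q2 = 0.
  move=> hx; have := hp x hx; rewrite /ip_prod /= => E.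
  by rewrite (ipBr hipV) (ipBr hipK) addrACA -E addrACA !subrr addr0.
pose G p := Jadj p.1 p.2.
have G0 : G 0 by exact: adjoint00.
have G_linear a x y : G x -> G y -> G (a *: x + y) by move=> *; apply: adjoint_linear.
have [r [[rs [hrs hrl]] hr]] := exists_orthogonal_projection hP G0 G_linear (q1, 0).
have hTr : Jadj r.1 r.2 := adjoint_closed hipK hipV hrs (cvgv_fst hK hrl) (cvgv_snd hV hrl).
have hAr : Jadj2 r.2 (q1 - r.1).
  move=> w k' hwk; have := hr (w, k') hwk; rewrite /ip_prod /= (ip0r hipK) addr0 => E.
  by rewrite (ipBr hipV) -E addrC addKr.
have q10 : q1 = 0.
  apply: (ip_eq0 hipV); have := q_perp r (conj hTr (ex_intro _ _ hAr)).
  by rewrite (ipC hipK) (hAr _ _ hq) -(ipC hipV) (ipBl hipV) addrC subrK.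
split=> //; rewrite q10 in hq; apply: (ip_eq0 hipK).
rewrite {2}/q2 (ipBr hipK) (hperp _ hq) sub0r (ip_cvgv_eq0r hipK _ hl2) ?oppr0 // => n.
by have [_ [g hg]] := hds n; apply: Jadj_kernel_perp hq hg.
Qed.

Lemma krein_closed_form_exists f k : Jadj f k -> (forall m, Jadj 0 m -> ipK m k = 0) ->
  closed_form ip SK f (c%:C * ip f f + ipK k k).
Proof.
move=> hT hperp; have [ds [hds hl1 hl2]] := krein_graph_approx hT hperp.
have [gs hgs] := choice (fun n => (hds n).2).
have hTs n : Jadj (ds n).1 (ds n).2 by case: (hds n).
exists (fun n => (ds n).1), (fun n => gs n + c%:C *: (ds n).1); split.
- by move=> n; apply/krein_extP; exists (ds n).2, (gs n).
- exact/(converges_toE hipV).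
- exact: (proj2 (krein_form_cauchyP hTs hgs (cvgv_cauchy hipV hl1)) (cvgv_cauchy hipK hl2)).
apply/cvgc_normE.
apply: eq_cvgc (cvgcD (cvgcMl c%:C (cvgc_ip hipV hl1 hl1)) (cvgc_ip hipK hl2 hl2)) => n.
by rewrite (krein_formE (hTs n) (hgs n)).
Qed.

Lemma krein_closed_form_ge f u : closed_form ip SK f u -> c%:C * ip f f <= u.
Proof.
move=> [w [w' [hSK /(converges_toE hipV) hw _ /cvgc_normE hval]]].
apply: (ler_cvgc _ (cvgcMl c%:C (cvgc_ip hipV hw hw)) hval) => n.
have [k [g [hT hA ->]]] := proj1 (krein_extP _ _) (hSK n).
by rewrite (krein_formE hT hA) lerDl ip_ge0.
Qed.

Lemma rel_ge_of_form_le (H : V -> V -> Prop) :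
  form_le (closed_form ip SK) (closed_form ip H) -> rel_ge ip H c.
Proof.
move=> hle f f' hff; have [[u hu] hall] := hle f _ (closed_form_cst hipV hff).
exact: le_trans (krein_closed_form_ge hu) (hall u hu).
Qed.

Section NonnegativeExtension.
Variable H : V -> V -> Prop.
Hypotheses (hH : selfadjoint ip H) (hSH : forall f g, S f g -> H f g) (hge : rel_ge ip H c).

Let form_H (p q : V * V) : C := ip p.2 q.1 - c%:C * ip p.1 q.1.
Let graph_H (p : V * V) : Prop := H p.1 p.2.

Lemma form_H_cauchy_schwarz p q : graph_H p -> graph_H q ->
  normc2 (form_H p q) <= complex.Re (form_H p p) * complex.Re (form_H q q).
Proof.
apply: cauchy_schwarz.
- by move=> a x y z; rewrite /form_H /= !(ipDZl hipV); ring.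
- by move=> a x y /hH hx /hH hy; apply/hH; apply: (adjoint_linear hipV hipV).
- move=> x y hx hy; rewrite /form_H conjcD conjcN conjcM conjc_real -!(ipC hipV).
  by rewrite (proj1 (hH _ _) hx _ _ hy).
- by move=> x hx; rewrite /form_H subr_ge0; apply: hge.
Qed.

Lemma closed_form_H_bound f v : closed_form ip H f v ->
  exists a : R, [/\ 0 <= a, v = c%:C * ip f f + a%:C &
    forall phi phi', S phi phi' -> normc2 (ip (phi' - c%:C *: phi) f) <= a * sqnorm ipK (Q phi)].
Proof.
move=> [u [u' [hu /(converges_toE hipV) hconv _ /cvgc_normE hval]]].
pose Y n := form_H (u n, u' n) (u n, u' n).
have hY : cvgc Y (v - c%:C * ip f f) by apply: cvgcB hval (cvgcMl _ (cvgc_ip hipV hconv hconv)).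
have hY0 n : 0 <= Y n by rewrite /Y /form_H /= subr_ge0; apply: hge.
set a := complex.Re (v - c%:C * ip f f).
have haE : v - c%:C * ip f f = a%:C by apply/ge0_realcE/(cvgc_ge0 hY0 hY).
exists a; split; first exact/ge0_Re/(cvgc_ge0 hY0 hY).
  by rewrite -haE addrC subrK.
move=> phi phi' hp; pose X n := form_H (phi, phi') (u n, u' n).
have hX : cvgc X (ip phi' f - c%:C * ip phi f).
  apply: cvgcB (cvgc_ip hipV (cvgv_cst hipV phi') hconv) _.
  exact: cvgcMl _ (cvgc_ip hipV (cvgv_cst hipV phi) hconv).
have hQphi : form_H (phi, phi') (phi, phi') = ipK (Q phi) (Q phi).
  by rewrite /form_H /= ((proj2 hQ) _ _ _ _ hp hp) addrC addKr.
have hle n : X n * conjc (X n) <= (sqnorm ipK (Q phi))%:C * Y n.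
  rewrite mulcJ (ge0_realcE (hY0 n)) -realcM lecR.
  by have := @form_H_cauchy_schwarz (phi, phi') (u n, u' n) (hSH hp) (hu n); rewrite hQphi.
have := ler_cvgc hle (cvgcM hX (cvgcJ hX)) (cvgcMl _ hY).
rewrite mulcJ haE -realcM lecR => h.
by rewrite (ipBl hipV) (ipZl hipV) [a * _]mulrC.
Qed.

Lemma form_le_of_rel_ge : form_le (closed_form ip SK) (closed_form ip H).
Proof.
move=> f v hv; have [a [ha -> hb]] := closed_form_H_bound hv.
have [k [hT hka hperp]] := exists_Jadj_repr ha hb.
split; first by exists (c%:C * ip f f + ipK k k); apply: krein_closed_form_exists.
move=> w /(krein_closed_form_value hT hperp) ->.
by rewrite lerD2l (sqnormE hipK) lecR.
Qed.

End NonnegativeExtension.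

End KreinExtension.

Local Close Scope complex_scope.
Unset Implicit Arguments.

Theorem corollary6p3 (R : realType)
  (V : lmodType R[i]) (ip : V -> V -> R[i])
  (K : lmodType R[i]) (ipK : K -> K -> R[i])
  (S : V -> V -> Prop) (gamma c : R) (Q : V -> K) :
  hilbert_space ip -> hilbert_space ipK ->
  linear_rel S -> lower_bound ip S gamma -> c <= gamma ->
  representing_map ip ipK S c Q ->
  forall H : V -> V -> Prop,
    selfadjoint ip H -> semibounded ip H -> (forall f g, S f g -> H f g) ->
    (rel_ge ip H c <->
     form_le (closed_form ip (krein_ext ip ipK S c Q)) (closed_form ip H)).
Proof.
move=> hV hK hS _ _ hQ H hH _ hSH; split.
- exact: (form_le_of_rel_ge hV hK hS hQ hH hSH).
- exact: (rel_ge_of_form_le hV hK (H := H)).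
Qed.
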